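(* Consider $N_a$ agents and $n$ anchors. For each agent $k\in\{1,\dots,N_a\}$ let $\varrho_k>0$ and let $\mathcal{I}_k$ be a finite index set; for each $k$, $i\in\mathcal{I}_k$ and $j\in\{1,\dots,n\}$ let $\hat\phi^{(i)}_{kj}\in\mathbb{R}$, $\tilde\phi^{(i)}_{kj}\ge0$, $\underline\xi^{(i)}_{kj}\ge0$ be given and let $\underline{\mathbf{R}}^{(i)}_k=\operatorname{diag}\{\underline\xi^{(i)}_{k1},\dots,\underline\xi^{(i)}_{kn}\}$. For a positive integer $M\ge3$ and $m\in\mathcal{M}=\{0,\dots,M-1\}$, let $\vartheta_m=(2m+1)\pi/M$ and define $\mathbf{h}^{(i)}_{k,m},\mathbf{g}^{(i)}_{k,m}\in\mathbb{R}^n$ by $[\mathbf{h}^{(i)}_{k,m}]_j=\max_{|\epsilon|\le2\tilde\phi^{(i)}_{kj}}\cos(2\hat\phi^{(i)}_{kj}-\vartheta_m+\epsilon)$ and $[\mathbf{g}^{(i)}_{k,m}]_j=[\mathbf{h}^{(i)}_{k,m}]_j/\cos(\pi/M)$. For $\mathbf{x}\succeq\mathbf{0}$ let $$\overline{\mathcal{P}}^{(i)}_M(\mathbf{p}_k;\mathbf{x})=\max_{m\in\mathcal{M}}\frac{4\cdot\mathbf{1}^{\mathsf T}\underline{\mathbf{R}}^{(i)}_k\mathbf{x}}{(\mathbf{1}^{\mathsf T}\underline{\mathbf{R}}^{(i)}_k\mathbf{x})^2-(\mathbf{g}^{(i)\mathsf T}_{k,m}\underline{\mathbf{R}}^{(i)}_k\mathbf{x})^2},$$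 and let $\underline{\mathcal{P}}^{(i)}_M(\mathbf{p}_k;\mathbf{x})$ be defined identically with $\mathbf{h}^{(i)}_{k,m}$ in place of $\mathbf{g}^{(i)}_{k,m}$, where each fraction whose denominator is nonpositive is regarded as $+\infty$. Let $c_1,\dots,c_L$ be affine functions on $\mathbb{R}^n$. Then the problem $$\min_{\mathbf{x}\succeq\mathbf{0}}\ \mathbf{1}^{\mathsf T}\mathbf{x}\ \ \text{s.t.}\ \ \overline{\mathcal{P}}^{(i)}_M(\mathbf{p}_k;\mathbf{x})\le\varrho_k\ \ \forall k,\ \forall i\in\mathcal{I}_k,\quad c_l(\mathbf{x})\le0\ \ (l=1,\dots,L)$$ is equivalent to the second-order cone program $$\min_{\mathbf{x}\succeq\mathbf{0}}\ \mathbf{1}^{\mathsf T}\mathbf{x}\ \ \text{s.t.}\ \ \big\|\mathbf{A}^{(i)}_{k,m}\underline{\mathbf{R}}^{(i)}_k\mathbf{x}+\mathbf{b}_k\big\|\le\mathbf{1}^{\mathsf T}\underline{\mathbf{R}}^{(i)}_k\mathbf{x}-2\varrho_k^{-1}\ \ \forall m\in\mathcal{M},\ \forall k,\ \forall i\in\mathcal{I}_k,\quad c_l(\mathbf{x})\le0,$$ where $\mathbf{A}^{(i)}_{k,m}=[\mathbf{g}^{(i)}_{k,m}\ \ \mathbf{0}]^{\mathsf T}\in\mathbb{R}^{2\times n}$ and $\mathbf{b}_k=[0\ \ 2\varrho_k^{-1}]^{\mathsf T}$. Similarly, the problem with $\underline{\mathcal{P}}^{(i)}_M$ in place of $\overline{\mathcal{P}}^{(i)}_M$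 is equivalent to the same second-order cone program with $\mathbf{A}^{(i)}_{k,m}=[\mathbf{h}^{(i)}_{k,m}\ \ \mathbf{0}]^{\mathsf T}$.
   Context: $\mathbf{1}$ is the all-ones vector, $\mathbf{0}$ the zero vector, $\|\cdot\|$ the Euclidean norm; $\mathbf{x}\succeq\mathbf{0}$ means entrywise nonnegative. $\mathbf{x}$ is the anchor transmit power vector; for agent $k$ and uncertainty cell $i$, $\hat\phi^{(i)}_{kj}$ and $\tilde\phi^{(i)}_{kj}$ are the nominal agent–anchor angle and its angular uncertainty, and $\underline\xi^{(i)}_{kj}$ is the lower bound of the equivalent ranging coefficient. ''Equivalent'' means the two problems have the same feasible set (and objective). *)

From HB Require Import structures.
From mathcomp Require Import all_boot all_order all_algebra.
From mathcomp Require Import all_classical all_reals all_analysis.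
Set Implicit Arguments. Unset Strict Implicit. Unset Printing Implicit Defensive.
Import Order.TTheory GRing.Theory Num.Theory.
Local Open Scope classical_set_scope.
Local Open Scope ring_scope.

Section Defs.
Variable R : realType.

Definition vartheta (M m : nat) : R := (2 * m + 1)%:R * pi / M%:R.

(* [h]_j = max_{|eps| <= 2 phitil} cos (2 phihat - th + eps) (the max exists,
   cos being continuous on a compact interval; we write it as the supremum) *)
Definition hval (phihat phitil th : R) : R :=
  sup [set y | exists2 e : R, `|e| <= 2 * phitil & y = cos (2 * phihat - th + e)].

Definition gval (M : nat) (phihat phitil th : R) : R :=
  hval phihat phitil th / cos (pi / M%:R).

Definition hvec (n M : nat) (phihat phitil : 'I_n -> R) (m : nat) : 'cV[R]_n :=
  \col_j hval (phihat j) (phitil j) (vartheta M m).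

Definition gvec (n M : nat) (phihat phitil : 'I_n -> R) (m : nat) : 'cV[R]_n :=
  \col_j gval M (phihat j) (phitil j) (vartheta M m).

Definition Rdiag (n : nat) (xi : 'I_n -> R) : 'M[R]_n := diag_mx (\row_j xi j).

Definition ones (n : nat) : 'cV[R]_n := const_mx 1.

Definition qform (n : nat) (u : 'cV[R]_n) (A : 'M[R]_n) (x : 'cV[R]_n) : R :=
  (u^T *m A *m x) 0 0.

Definition nonneg (n : nat) (x : 'cV[R]_n) : Prop := forall j, 0 <= x j 0.

Definition enorm (p : nat) (v : 'cV[R]_p) : R := Num.sqrt (\sum_i (v i 0) ^+ 2).

Definition Pfrac (n : nat) (v : 'cV[R]_n) (xi : 'I_n -> R) (x : 'cV[R]_n) : \bar R :=
  let s := qform (ones n) (Rdiag xi) x in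
  let t := qform v (Rdiag xi) x in
  if 0 < s ^+ 2 - t ^+ 2 then ((4 * s) / (s ^+ 2 - t ^+ 2))%:E else +oo%E.

Definition PM (n M : nat) (vec : nat -> 'cV[R]_n) (xi : 'I_n -> R) (x : 'cV[R]_n)
  : \bar R := \big[maxe/-oo%E]_(m < M) Pfrac (vec m) xi x.

Definition PMbar (n M : nat) (phihat phitil xi : 'I_n -> R) (x : 'cV[R]_n) : \bar R :=
  PM M (gvec M phihat phitil) xi x.
Definition PMunder (n M : nat) (phihat phitil xi : 'I_n -> R) (x : 'cV[R]_n) : \bar R :=
  PM M (hvec M phihat phitil) xi x.

Definition Amat (n : nat) (v : 'cV[R]_n) : 'M[R]_(2, n) :=
  \matrix_(i < 2, j < n) (if i == 0 then v j 0 else 0).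

Definition bvec (rho : R) : 'cV[R]_2 := \col_(i < 2) (if i == 0 then 0 else 2 / rho).

Definition soc (n : nat) (v : 'cV[R]_n) (xi : 'I_n -> R) (rho : R) (x : 'cV[R]_n)
  : Prop :=
  enorm (Amat v *m Rdiag xi *m x + bvec rho)
    <= qform (ones n) (Rdiag xi) x - 2 / rho.

Definition affine_fun (n : nat) (c : 'cV[R]_n -> R) : Prop :=
  exists (a : 'cV[R]_n) (b : R), forall x, c x = \sum_j a j 0 * x j 0 + b.

End Defs.

(* Fix one constraint and write s = 1^T R x >= 0, t = v^T R x, u = 2/rho.  The
   fractional constraint 4 s / (s^2 - t^2) <= rho (with +oo for a nonpositive
   denominator) says s^2 - t^2 > 0 and 2 u s <= s^2 - t^2, i.e. t^2 + u^2 <= (s - u)^2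
   with s - u >= 0, and this is exactly the cone constraint sqrt(t^2 + u^2) <= s - u.
   The norm on the left is that of A R x + b = [t; u].  A maximum over m is bounded
   by rho iff each term is, so the feasible sets agree for any family of vectors,
   in particular for g and for h. *)
From HB Require Import structures.
From mathcomp Require Import all_boot all_order all_algebra.
From mathcomp Require Import all_classical all_reals all_analysis.
From mathcomp Require Import lra.
Import Order.TTheory GRing.Theory Num.Theory.
Local Open Scope ring_scope.

Lemma sqrtr_le_iff (R : rcfType) (a b : R) : 0 <= a ->
  Num.sqrt a <= b <-> 0 <= b /\ a <= b ^+ 2.
Proof.
move=> a_ge0; split=> [le_sqrt_b | [b_ge0 le_a_b2]].
  have b_ge0 : 0 <= b by apply: le_trans le_sqrt_b; exact: sqrtr_ge0.
  split=> //; rewrite -(sqr_sqrtr a_ge0).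
  have := sqrtr_ge0 a; nra.
by rewrite -(ger0_norm b_ge0) -sqrtr_sqr ler_sqrt // exprn_ge0.
Qed.

Lemma frac_pinfty_le (R : realFieldType) (a d r : R) : 0 < r ->
  ((if (0 < d)%R then (a / d)%:E else +oo) <= r%:E)%E <-> 0 < d /\ a <= r * d.
Proof.
move=> r_gt0; case: ifP => [d_gt0 | _].
  by rewrite lee_fin ler_pdivrMr // mulrC; split=> // -[].
by rewrite leye_eq; split=> // -[].
Qed.

Lemma sqrt_cone_le (R : rcfType) (s t r : R) : 0 < r -> 0 <= s ->
  Num.sqrt (t ^+ 2 + (2 / r) ^+ 2) <= s - 2 / r
  <-> 0 < s ^+ 2 - t ^+ 2 /\ 4 * s <= r * (s ^+ 2 - t ^+ 2).
Proof.
move=> r_gt0 s_ge0; rewrite sqrtr_le_iff; last by rewrite addr_ge0 ?sqr_ge0.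
have u_gt0 : 0 < r^-1 by rewrite invr_gt0.
have r_u : r * r^-1 = 1 by rewrite divff ?gt_eqF.
set u := r^-1 in u_gt0 r_u *.
have scale_u (d : R) : 4 * s <= r * d <-> 4 * s * u <= d.
  by split=> h; nra.
rewrite scale_u; split=> [[s_ge2u le_sq] | [d_gt0 le_4su]].
  have le_4su : 4 * s * u <= s ^+ 2 - t ^+ 2 by nra.
  have s_gt0 : 0 < s by lra.
  by split=> //; apply: lt_le_trans le_4su; rewrite !mulr_gt0.
have s_gt0 : 0 < s by rewrite lt_neqAle s_ge0 andbT; apply/eqP=> s0; nra.
(* 4 s u <= s^2 - t^2 <= s^2 yields s >= 4u, hence s - 2u >= 0 *)
have le_4u_s : 4 * u <= s by rewrite -(ler_pM2l s_gt0); nra.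
split; nra.
Qed.

Lemma enorm_Amat_bvec (R : realType) n (v : 'cV[R]_n) xi (rho : R) x :
  enorm (Amat v *m Rdiag xi *m x + bvec rho) =
  Num.sqrt (qform v (Rdiag xi) x ^+ 2 + (2 / rho) ^+ 2).
Proof.
rewrite /enorm big_ord_recr big_ord_recr big_ord0 /= add0r /qform -!mulmxA.
congr (Num.sqrt (_ ^+ 2 + _ ^+ 2)); rewrite !mxE /=.
  by rewrite addr0; apply: eq_bigr => j _; rewrite !mxE.
by rewrite big1 ?add0r // => j _; rewrite !mxE mul0r.
Qed.

Lemma qform_ones_ge0 (R : realType) n (xi : 'I_n -> R) x :
  (forall j, 0 <= xi j) -> nonneg x -> 0 <= qform (ones R n) (Rdiag xi) x.
Proof.
move=> xi_ge0 x_ge0; rewrite /qform !mxE; apply: sumr_ge0 => j _.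
rewrite !mxE mulr_ge0 ?x_ge0 //; apply: sumr_ge0 => k _; rewrite !mxE.
by case: eqP => _; rewrite ?mulr1n ?mulr0n ?mulr0 ?mul1r.
Qed.

Lemma Pfrac_le_soc (R : realType) n (v : 'cV[R]_n) xi (rho : R) x :
  0 < rho -> (forall j, 0 <= xi j) -> nonneg x ->
  (Pfrac v xi x <= rho%:E)%E <-> soc v xi rho x.
Proof.
move=> rho_gt0 xi_ge0 x_ge0.
rewrite /Pfrac /soc enorm_Amat_bvec frac_pinfty_le // sqrt_cone_le //.
exact: qform_ones_ge0.
Qed.

Lemma PM_le_soc (R : realType) n M (vec : nat -> 'cV[R]_n) xi (rho : R) x :
  0 < rho -> (forall j, 0 <= xi j) -> nonneg x ->
  (PM M vec xi x <= rho%:E)%E <-> forall m : 'I_M, soc (vec m) xi rho x.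
Proof.
move=> rho_gt0 xi_ge0 x_ge0; rewrite /PM; split.
  by move/bigmax_leP => [_ le_rho] m; apply/Pfrac_le_soc/le_rho.
move=> soc_m; apply/bigmax_leP; split=> [|m _]; first exact: leNye.
exact/Pfrac_le_soc.
Qed.

Lemma feasible_PM_soc {R : realType} {Na n : nat} (M : nat) {L : nat}
  {I : 'I_Na -> finType} {rho : 'I_Na -> R}
  (vec : forall k : 'I_Na, I k -> nat -> 'cV[R]_n)
  {xi : forall k : 'I_Na, I k -> 'I_n -> R} (c : 'I_L -> 'cV[R]_n -> R) :
  (forall k, 0 < rho k) -> (forall k i j, 0 <= xi k i j) ->
  forall x : 'cV[R]_n,
    (nonneg x /\
     (forall k (i : I k), (PM M (vec k i) (xi k i) x <= (rho k)%:E)%E) /\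
     (forall l, c l x <= 0))
    <->
    (nonneg x /\
     (forall (m : 'I_M) k (i : I k), soc (vec k i m) (xi k i) (rho k) x) /\
     (forall l, c l x <= 0)).
Proof.
move=> rho_gt0 xi_ge0 x; split=> -[x_ge0 [cone c_le0]]; do !split=> //.
  by move=> m k i; move: (cone k i); rewrite PM_le_soc //; apply.
by move=> k i; apply/PM_le_soc => // m; apply: cone.
Qed.

Theorem proposition5 (R : realType) (Na n M L : nat)
  (I : 'I_Na -> finType) (rho : 'I_Na -> R)
  (phihat phitil xi : forall k : 'I_Na, I k -> 'I_n -> R)
  (c : 'I_L -> 'cV[R]_n -> R) :
  (forall k, 0 < rho k) ->
  (forall k i j, 0 <= phitil k i j) ->
  (forall k i j, 0 <= xi k i j) ->
  (3 <= M)%N ->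
  (forall l, affine_fun (c l)) ->
  (forall x : 'cV[R]_n,
     (nonneg x /\
      (forall k (i : I k), (PMbar M (phihat k i) (phitil k i) (xi k i) x
                             <= (rho k)%:E)%E) /\
      (forall l, c l x <= 0))
     <->
     (nonneg x /\
      (forall (m : 'I_M) k (i : I k),
         soc (gvec M (phihat k i) (phitil k i) m) (xi k i) (rho k) x) /\
      (forall l, c l x <= 0))) /\
  (forall x : 'cV[R]_n,
     (nonneg x /\
      (forall k (i : I k), (PMunder M (phihat k i) (phitil k i) (xi k i) x
                             <= (rho k)%:E)%E) /\
      (forall l, c l x <= 0))
     <->
     (nonneg x /\
      (forall (m : 'I_M) k (i : I k),
         soc (hvec M (phihat k i) (phitil k i) m) (xi k i) (rho k) x) /\
      (forall l, c l x <= 0))).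
Proof.
move=> rho_gt0 _ xi_ge0 _ _; split.
  exact: (feasible_PM_soc M (fun k i => gvec M (phihat k i) (phitil k i)) c
    rho_gt0 xi_ge0).
exact: (feasible_PM_soc M (fun k i => hvec M (phihat k i) (phitil k i)) c
  rho_gt0 xi_ge0).
Qed.
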